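(* Let $s_1,s_2\ge0$, $s=(s_1,s_2)$. For a probability vector $q$ on $\hat{\mathcal X}$, define: - $A(x,\hat x,s)=\exp\{-s_1d(x,\hat x)-s_2g(p,q_{Q[q]},\hat x)\}$, with $g(p,r,\hat x)=f\big(\tfrac{p(\hat x)}{r(\hat x)}\big)-\tfrac{p(\hat x)}{r(\hat x)}\partial f\big(\tfrac{p(\hat x)}{r(\hat x)}\big)$; - $Q[q](\hat x|x)=q(\hat x)A(x,\hat x,s)/\sum_{i}q(i)A(x,i,s)$, which is defined implicitly, since $A$ depends on the output marginal $q_{Q[q]}$ of $Q[q]$. Let $q^*$ achieve the minimum below, and set $$D_s=\sum_{x,\hat x}p(x)\frac{q^*(\hat x)A(x,\hat x,s)}{\sum_i q^*(i)A(x,i,s)}d(x,\hat x),\qquad P_s=D_f(p\|q_{Q[q^*]}).$$ Then $$R(D_s,P_s)=-s_1D_s-s_2P_s+\min_q\Big[s_2\sum_{\hat x}p(\hat x)\,\partial f\Big(\frac{p(\hat x)}{q_{Q[q]}(\hat x)}\Big)-\sum_x p(x)\log\Big(\sum_{\hat x}q(\hat x)A(x,\hat x,s)\Big)\Big].$$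
   Context: Finite alphabets $\mathcal X=\hat{\mathcal X}$ (same finite set). The source distribution is $p$ on $\mathcal X$, and $d:\mathcal X\times\hat{\mathcal X}\to[0,\infty)$ is a distortion. $f:(0,\infty)\to\mathbb R$ is convex with $f(1)=0$, and $D_f(p\|q)=\sum_x q(x)f(p(x)/q(x))$. $\partial f(t)$ denotes a subgradient of $f$ at $t$. For a transition matrix $Q$, $q_Q(\hat x)=\sum_xp(x)Q(\hat x|x)$ is the output marginal, and $I(p,Q)=\sum_{x,\hat x}p(x)Q(\hat x|x)\log\frac{Q(\hat x|x)}{q_Q(\hat x)}$. The rate-distortion-perception function is $R(D,P)=\min_Q I(p,Q)$ subject to $\sum_{x,\hat x}p(x)Q(\hat x|x)d(x,\hat x)\le D$ and $D_f(p\|q_Q)\le P$, for $D,P>0$. *)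

From mathcomp Require Import all_boot all_order all_algebra.
From mathcomp Require Import reals sequences exp.
Set Implicit Arguments. Unset Strict Implicit. Unset Printing Implicit Defensive.
Import Order.TTheory GRing.Theory Num.Theory.
Local Open Scope ring_scope.

Section RDP.
Context {R : realType} {X : finType}.

Definition is_prob (q : X -> R) : Prop :=
  (forall x, 0 <= q x) /\ \sum_(x : X) q x = 1.

(* transition matrix Q x xh = Q(xh | x) *)
Definition is_channel (Q : X -> X -> R) : Prop := forall x, is_prob (Q x).

Definition qout (p : X -> R) (Q : X -> X -> R) (xh : X) : R :=
  \sum_(x : X) p x * Q x xh.

Definition Df (f : R -> R) (p q : X -> R) : R :=
  \sum_(x : X) q x * f (p x / q x).

(* mutual information I(p,Q) (terms with Q = 0 contribute 0) *)
Definition MI (p : X -> R) (Q : X -> X -> R) : R :=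
  \sum_(x : X) \sum_(xh : X) p x * Q x xh * ln (Q x xh / qout p Q xh).

Definition avg_dist (p : X -> R) (d : X -> X -> R) (Q : X -> X -> R) : R :=
  \sum_(x : X) \sum_(xh : X) p x * Q x xh * d x xh.

(* Q is feasible for R(D,P); D_f(p||q_Q) requires q_Q > 0 *)
Definition feasible (p : X -> R) (d : X -> X -> R) (f : R -> R)
  (D P : R) (Q : X -> X -> R) : Prop :=
  [/\ is_channel Q, (forall xh, 0 < qout p Q xh),
      avg_dist p d Q <= D & Df f p (qout p Q) <= P].

Definition is_min (S : R -> Prop) (v : R) : Prop :=
  S v /\ forall y, S y -> v <= y.

Definition RDP_is (p : X -> R) (d : X -> X -> R) (f : R -> R)
  (D P v : R) : Prop :=
  is_min (fun y => exists Q, feasible p d f D P Q /\ MI p Q = y) v.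

Definition convex_pos (f : R -> R) : Prop :=
  forall x y t, 0 < x -> 0 < y -> 0 <= t <= 1 ->
    f (t * x + (1 - t) * y) <= t * f x + (1 - t) * f y.

Definition is_subgrad (f df : R -> R) : Prop :=
  forall t u, 0 < t -> 0 < u -> f t + df t * (u - t) <= f u.

Definition gfun (f df : R -> R) (p r : X -> R) (xh : X) : R :=
  f (p xh / r xh) - p xh / r xh * df (p xh / r xh).

Definition Aw (p : X -> R) (d : X -> X -> R) (f df : R -> R) (s1 s2 : R)
  (Q : X -> X -> R) (x xh : X) : R :=
  expR (- s1 * d x xh - s2 * gfun f df p (qout p Q) xh).

(* Q = Q[q] : the implicit (fixed-point) definition *)
Definition is_Qof (p : X -> R) (d : X -> X -> R) (f df : R -> R) (s1 s2 : R)
  (q : X -> R) (Q : X -> X -> R) : Prop :=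
  forall x xh, Q x xh =
    q xh * Aw p d f df s1 s2 Q x xh / \sum_(i : X) q i * Aw p d f df s1 s2 Q x i.

(* the bracket minimised over q, with Q = Q[q] *)
Definition bracket (p : X -> R) (d : X -> X -> R) (f df : R -> R) (s1 s2 : R)
  (q : X -> R) (Q : X -> X -> R) : R :=
  s2 * (\sum_(xh : X) p xh * df (p xh / qout p Q xh))
  - \sum_(x : X) p x * ln (\sum_(xh : X) q xh * Aw p d f df s1 s2 Q x xh).

Definition qdom (q : X -> R) : Prop := is_prob q /\ forall xh, 0 < q xh.

End RDP.

From mathcomp Require Import all_boot all_order all_algebra.
From mathcomp Require Import reals sequences exp.
From mathcomp Require Import ring lra.
Import Order.TTheory GRing.Theory Num.Theory.
Local Open Scope ring_scope.

(* Weak duality with attainment.  For any channel Q with positive output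
   marginal q, Gibbs' variational principle applied to each row of Q against
   the tilted weights q(xh) A(x,xh,s), together with the subgradient
   inequality f u >= f t + df t (u - t), bounds the bracket at q by the
   Lagrangian I(p,Q) + s1 E[d] + s2 D_f(p||q).  By minimality of q* the
   bracket at q* is thus a lower bound for the Lagrangian of every feasible
   channel.  At Q* = Q[q*] the Lagrangian equals the bracket at q* minus
   the nonnegative divergence KL of the output marginal of Q* from q*, so Q*
   attains the bound; it is feasible for (D_s, P_s) by construction. *)

Section Gibbs.
Context {R : realType} {I : finType}.

Lemma sub_le_mul_ln_div {a b : R} : 0 <= a -> 0 < b -> a - b <= a * ln (a / b).
Proof.
move=> a_ge0 b_gt0; have [->|a_neq0] := eqVneq a 0.
  by rewrite mul0r sub0r oppr_le0 ltW.
have a_gt0 : 0 < a by rewrite lt_def a_neq0.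
have ln_ba : ln (b / a) <= b / a - 1.
  by rewrite -[X in ln X](addrNK 1) addrC le_ln1Dx // ltrBDl subrr divr_gt0.
rewrite -invf_div lnV ?posrE ?divr_gt0 // mulrN.
have := ler_wpM2l (ltW a_gt0) ln_ba.
by rewrite mulrBr mulrCA divff ?mulr1 // => ?; lra.
Qed.

Definition KL (a q : I -> R) : R := \sum_i a i * ln (a i / q i).

Lemma gibbs_variational (a q E : I -> R) :
  is_prob a -> (forall i, 0 < q i) ->
  - ln (\sum_i q i * expR (- E i)) <= KL a q + \sum_i a i * E i.
Proof.
move=> [a_ge0 a_sum1] q_gt0; rewrite /KL.
set w := fun i => q i * expR (- E i); set Z := \sum_i w i.
have w_gt0 i : 0 < w i by rewrite mulr_gt0 ?expR_gt0.
have [i0 _|I0] := pickP (@predT I); last first.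
  by move: a_sum1; rewrite big_pred0 // => /eqP; rewrite eq_sym oner_eq0.
have Z_gt0 : 0 < Z.
  by rewrite /Z (bigD1 i0) //= ltr_pwDl // sumr_ge0 // => i _; rewrite ltW.
have term i : a i - w i / Z <= a i * ln (a i / q i) + a i * E i + a i * ln Z.
  apply: le_trans (sub_le_mul_ln_div (a_ge0 i) (divr_gt0 (w_gt0 i) Z_gt0)) _.
  have [->|a_neq0] := eqVneq (a i) 0; first by rewrite !mul0r !addr0.
  have a_gt0 : 0 < a i by rewrite lt_def a_neq0 a_ge0.
  rewrite !ln_div ?posrE ?divr_gt0 // lnM ?posrE ?expR_gt0 // expRK.
  lra.
have := ler_sum (index_enum I) (P := xpredT) (fun i _ => term i).
rewrite sumrB -mulr_suml divff ?gt_eqF // a_sum1 subrr.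
rewrite !big_split /= -mulr_suml a_sum1 mul1r.
lra.
Qed.

Lemma KL_ge0 (a q : I -> R) :
  is_prob a -> is_prob q -> (forall i, 0 < q i) -> 0 <= KL a q.
Proof.
move=> a_prob [_ q_sum1] q_gt0.
have := gibbs_variational a q (fun=> 0) a_prob q_gt0.
under eq_bigr do rewrite oppr0 expR0 mulr1.
by rewrite q_sum1 ln1 oppr0 [X in _ + X]big1 ?addr0 // => i _; rewrite mulr0.
Qed.

End Gibbs.

Section Lagrangian.
Context {R : realType} {X : finType}.
Variables (p : X -> R) (d : X -> X -> R) (f df : R -> R) (s1 s2 : R).

Definition lagrangian (Q : X -> X -> R) : R :=
  MI p Q + s1 * avg_dist p d Q + s2 * Df f p (qout p Q).

Definition partition (Qof : (X -> R) -> X -> X -> R) (q : X -> R) (x : X) : R :=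
  \sum_i q i * Aw p d f df s1 s2 (Qof q) x i.

End Lagrangian.

Section RateDistortionPerception.
Context {R : realType} {X : finType}.
Context {p : X -> R} {d : X -> X -> R} {f df : R -> R} {s1 s2 : R}.
Context {Qof : (X -> R) -> X -> X -> R}.
Hypotheses (p_prob : is_prob p) (p_gt0 : forall x, 0 < p x).
Hypotheses (df_subgrad : is_subgrad f df) (s2_ge0 : 0 <= s2).
Hypothesis Qof_fixed : forall q, qdom q -> is_Qof p d f df s1 s2 q (Qof q).

Local Notation L := (lagrangian p d f s1 s2).
Local Notation Z := (partition p d f df s1 s2 Qof).

Lemma sum_joint_qout (Q : X -> X -> R) (g : X -> R) :
  \sum_x \sum_xh p x * Q x xh * g xh = \sum_xh qout p Q xh * g xh.
Proof. by rewrite exchange_big; apply: eq_bigr => xh _; rewrite /qout mulr_suml. Qed.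

Lemma qdom_qout {Q : X -> X -> R} :
  is_channel Q -> (forall xh, 0 < qout p Q xh) -> qdom (qout p Q).
Proof.
move=> Q_ch q_gt0; split=> //; split=> [xh|]; first exact: ltW.
rewrite /qout exchange_big /=.
under eq_bigr do rewrite -mulr_sumr (Q_ch _).2 mulr1.
exact: p_prob.2.
Qed.

Lemma bracketE q : bracket p d f df s1 s2 q (Qof q) =
  s2 * \sum_xh p xh * df (p xh / qout p (Qof q) xh) - \sum_x p x * ln (Z q x).
Proof. by []. Qed.

Lemma Df_ge_tangent {q r : X -> R} :
  (forall xh, 0 < q xh) -> (forall xh, 0 < r xh) ->
  \sum_xh p xh * df (p xh / r xh) + \sum_xh q xh * gfun f df p r xh <= Df f p q.
Proof.
move=> q_gt0 r_gt0; rewrite -big_split; apply: ler_sum => xh _ /=.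
have t_gt0 : 0 < p xh / r xh by rewrite divr_gt0.
have u_gt0 : 0 < p xh / q xh by rewrite divr_gt0.
have := ler_wpM2l (ltW (q_gt0 xh)) (df_subgrad _ _ t_gt0 u_gt0).
suff -> : p xh * df (p xh / r xh) + q xh * gfun f df p r xh =
  q xh * (f (p xh / r xh) + df (p xh / r xh) * (p xh / q xh - p xh / r xh)) by [].
by rewrite /gfun; field; rewrite !gt_eqF.
Qed.

Lemma sum_mul_gfun (r : X -> R) : (forall xh, 0 < r xh) ->
  \sum_xh r xh * gfun f df p r xh = Df f p r - \sum_xh p xh * df (p xh / r xh).
Proof.
move=> r_gt0; rewrite /Df -sumrB; apply: eq_bigr => xh _.
by rewrite /gfun; field; rewrite gt_eqF.
Qed.

Section FixedPoint.
Context {q : X -> R}.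
Hypothesis q_dom : qdom q.

Lemma partition_gt0 x : 0 < Z q x.
Proof.
rewrite /partition (bigD1 x) //= ltr_pwDl ?mulr_gt0 ?expR_gt0 ?q_dom.2 //.
by rewrite sumr_ge0 // => i _; rewrite mulr_ge0 ?ltW ?expR_gt0 ?q_dom.2.
Qed.

Lemma Qof_gt0 x xh : 0 < Qof q x xh.
Proof.
by rewrite Qof_fixed // -/(Z q x) divr_gt0 ?mulr_gt0 ?expR_gt0 ?q_dom.2 ?partition_gt0.
Qed.

Lemma Qof_channel : is_channel (Qof q).
Proof.
move=> x; split=> [xh|]; first exact: ltW (Qof_gt0 x xh).
under eq_bigr do rewrite Qof_fixed //.
by rewrite -mulr_suml -/(Z q x) divff // gt_eqF ?partition_gt0.
Qed.

Lemma qout_Qof_gt0 xh : 0 < qout p (Qof q) xh.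
Proof.
rewrite /qout (bigD1 xh) //= ltr_pwDl ?mulr_gt0 ?Qof_gt0 //.
by rewrite sumr_ge0 // => x _; rewrite mulr_ge0 ?ltW ?Qof_gt0.
Qed.

Lemma MI_Qof : MI p (Qof q) =
  - KL (qout p (Qof q)) q - s1 * avg_dist p d (Qof q)
  - s2 * \sum_xh qout p (Qof q) xh * gfun f df p (qout p (Qof q)) xh
  - \sum_x p x * ln (Z q x).
Proof.
set r := qout p (Qof q); set g := gfun f df p r.
have ln_Qof x xh : ln (Qof q x xh / r xh) =
    - ln (r xh / q xh) - (s1 * d x xh + s2 * g xh) - ln (Z q x).
  have r_gt0 : 0 < r xh := qout_Qof_gt0 xh.
  rewrite [Qof q x xh]Qof_fixed // -/(Z q x) !ln_div ?lnM ?posrE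
    ?divr_gt0 ?mulr_gt0 ?expR_gt0 ?partition_gt0 ?q_dom.2 //.
  by rewrite /Aw expRK -/r -/g; ring.
rewrite /MI /KL /avg_dist -/r -!sum_joint_qout !mulr_sumr -!sumrN -!big_split.
apply: eq_bigr => x _.
have -> : p x * ln (Z q x) = \sum_xh p x * Qof q x xh * ln (Z q x).
  by rewrite -mulr_suml -mulr_sumr (Qof_channel x).2 mulr1.
rewrite !mulr_sumr -!sumrN -!big_split; apply: eq_bigr => xh _ /=.
by rewrite ln_Qof; ring.
Qed.

Lemma lagrangian_Qof :
  L (Qof q) = bracket p d f df s1 s2 q (Qof q) - KL (qout p (Qof q)) q.
Proof.
rewrite /lagrangian MI_Qof sum_mul_gfun ?bracketE; first by ring.
exact: qout_Qof_gt0.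
Qed.

End FixedPoint.

Lemma lagrangian_ge_bracket (Q : X -> X -> R) :
  is_channel Q -> (forall xh, 0 < qout p Q xh) ->
  bracket p d f df s1 s2 (qout p Q) (Qof (qout p Q)) <= L Q.
Proof.
move=> Q_ch q_gt0; have q_dom := qdom_qout Q_ch q_gt0.
set q := qout p Q; set r := qout p (Qof q); set g := gfun f df p r.
have row x : - ln (Z q x) <= KL (Q x) q + \sum_xh Q x xh * (s1 * d x xh + s2 * g xh).
  have Z_gibbs : Z q x = \sum_xh q xh * expR (- (s1 * d x xh + s2 * g xh)).
    by apply: eq_bigr => xh _; rewrite opprD -mulNr.
  by rewrite Z_gibbs gibbs_variational.
have energy : - \sum_x p x * ln (Z q x) <=
    MI p Q + s1 * avg_dist p d Q + s2 * \sum_xh q xh * g xh.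
  have -> : MI p Q + s1 * avg_dist p d Q + s2 * \sum_xh q xh * g xh =
      \sum_x p x * (KL (Q x) q + \sum_xh Q x xh * (s1 * d x xh + s2 * g xh)).
    rewrite -sum_joint_qout /MI /avg_dist -/q !mulr_sumr -!big_split.
    apply: eq_bigr => x _; rewrite /KL mulrDr !mulr_sumr -!big_split.
    by apply: eq_bigr => xh _ /=; ring.
  rewrite -sumrN; apply: ler_sum => x _.
  by rewrite -mulrN ler_pM2l.
have tangent := ler_wpM2l s2_ge0 (Df_ge_tangent q_gt0 (qout_Qof_gt0 q_dom)).
rewrite bracketE /lagrangian -/q -/r; rewrite mulrDr in tangent.
lra.
Qed.

End RateDistortionPerception.

Theorem corollary1 (R : realType) (X : finType)
  (p : X -> R) (d : X -> X -> R) (f df : R -> R) (s1 s2 : R)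
  (Qof : (X -> R) -> X -> X -> R) (qstar : X -> R) :
  is_prob p -> (forall x, 0 < p x) ->
  (forall x xh, 0 <= d x xh) ->
  convex_pos f -> f 1 = 0 -> is_subgrad f df ->
  0 <= s1 -> 0 <= s2 ->
  (forall q, qdom q -> is_Qof p d f df s1 s2 q (Qof q)) ->
  qdom qstar ->
  (forall q, qdom q ->
     bracket p d f df s1 s2 qstar (Qof qstar) <= bracket p d f df s1 s2 q (Qof q)) ->
  let Ds := \sum_(x : X) \sum_(xh : X)
      p x * (qstar xh * Aw p d f df s1 s2 (Qof qstar) x xh
             / \sum_(i : X) qstar i * Aw p d f df s1 s2 (Qof qstar) x i) * d x xh in
  let Ps := Df f p (qout p (Qof qstar)) in
  RDP_is p d f Ds Ps
    (- s1 * Ds - s2 * Ps + bracket p d f df s1 s2 qstar (Qof qstar)).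
Proof.
move=> p_prob p_gt0 _ _ _ df_subgrad s1_ge0 s2_ge0 Qof_fixed qstar_dom bracket_min Ds Ps.
set Qs := Qof qstar.
have Ds_avg : Ds = avg_dist p d Qs.
  by apply: eq_bigr => x _; apply: eq_bigr => xh _; rewrite [Qs x xh]Qof_fixed.
have Qs_ch := Qof_channel Qof_fixed qstar_dom.
have Qs_pos := qout_Qof_gt0 p_gt0 Qof_fixed qstar_dom.
have lower Q : is_channel Q -> (forall xh, 0 < qout p Q xh) ->
    bracket p d f df s1 s2 qstar Qs <= lagrangian p d f s1 s2 Q.
  move=> Q_ch Q_pos; apply: le_trans (bracket_min _ (qdom_qout p_prob Q_ch Q_pos)) _.
  exact: lagrangian_ge_bracket.
have lagrangian_Qs : lagrangian p d f s1 s2 Qs = bracket p d f df s1 s2 qstar Qs.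
  apply/le_anti; rewrite lower // andbT.
  rewrite (lagrangian_Qof p_gt0 Qof_fixed qstar_dom) lerBlDr lerDl.
  exact: KL_ge0 (qdom_qout p_prob Qs_ch Qs_pos).1 qstar_dom.1 qstar_dom.2.
split.
  exists Qs; split; first by split; rewrite // -Ds_avg.
  by move: lagrangian_Qs; rewrite /lagrangian -Ds_avg -/Ps => ?; lra.
move=> _ [Q [[Q_ch Q_pos Q_D Q_P] <-]].
have := lower Q Q_ch Q_pos; rewrite /lagrangian => ?.
have := ler_wpM2l s1_ge0 Q_D; have := ler_wpM2l s2_ge0 Q_P.
lra.
Qed.
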